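(* Let $(X\cup Y,\mathbf{d})$ be a finite metric space and let $\epsilon \in (0,\frac{1}{2})$. For every $x\in X$ let $N_x$ be an $\epsilon \cdot \mathbf{d}(x,Y)$-net of $B_Y(\pi_Y(x), \mathbf{d}(x,Y)/\epsilon)$ with $\pi_Y(x)\in N_x$. For all $x\in X$ and $y\in Y$ define $\widehat{\mathbf{d}}(x,y) = \min_{u\in N_x} \mathbf{d}(x,u) + \mathbf{d}(u,y)$. Then for all $x\in X$ and $y\in Y$, \[ \mathbf{d}(x,y) \le \widehat{\mathbf{d}}(x,y) \le (1+4 \epsilon) \cdot \mathbf{d}(x,y). \]
   Context: For $S\subseteq X\cup Y$, $x\in X\cup Y$ and $r>0$, $B_S(x,r)=\{y\in S:\mathbf{d}(x,y)\le r\}$. $\pi_S(x)$ denotes a point of $S$ closest to $x$, and $\mathbf{d}(x,S)=\mathbf{d}(x,\pi_S(x))$. For $\rho>0$, a $\rho$-net of a set $B$ is a subset $N\subseteq B$ such that any two distinct points of $N$ are at distance at least $\rho$ and every point of $B$ is within distance $\rho$ of some point of $N$. *)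

From mathcomp Require Import all_boot all_order all_algebra.
Set Implicit Arguments. Unset Strict Implicit. Unset Printing Implicit Defensive.
Import Order.TTheory GRing.Theory Num.Theory.
Local Open Scope ring_scope.

Definition is_metric (R : realFieldType) (T : finType) (d : T -> T -> R) : Prop :=
  [/\ forall x y, 0 <= d x y,
      forall x y, d x y = 0 <-> x = y,
      forall x y, d x y = d y x
    & forall x y z, d x z <= d x y + d y z].

Definition ballS (R : realFieldType) (T : finType) (d : T -> T -> R)
  (S : {set T}) (x : T) (r : R) : {set T} := [set y in S | d x y <= r].

Definition is_proj (R : realFieldType) (T : finType) (d : T -> T -> R)
  (S A : {set T}) (pi : T -> T) : Prop :=
  forall x, x \in A -> pi x \in S /\ (forall y, y \in S -> d x (pi x) <= d x y).

Definition is_net (R : realFieldType) (T : finType) (d : T -> T -> R)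
  (rho : R) (N B : {set T}) : Prop :=
  [/\ N \subset B,
      (forall u v, u \in N -> v \in N -> u != v -> rho <= d u v)
    & (forall b, b \in B -> exists2 u, u \in N & d b u <= rho)].

(* dhat(x,y) = min_{u in N x} d(x,u) + d(u,y).  The fold is seeded with the
   value at pi x, which belongs to N x by hypothesis, so this is exactly the
   minimum over N x. *)
Definition dhat (R : realFieldType) (T : finType) (d : T -> T -> R)
  (N : T -> {set T}) (pi : T -> T) (x y : T) : R :=
  \big[Order.min/ d x (pi x) + d (pi x) y]_(u in N x) (d x u + d u y).

(* If y is close to pi(x), i.e.
   d(pi x, y) <= d(x, Y)/eps, then y is eps d(x, Y)-close to some u of the net
   N_x and the detour x -> u -> y costs at most 2 eps d(x, y) extra.  If y is
   far, then d(x, Y) < eps d(pi x, y) <= eps (d(x, Y) + d(x, y)) forces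
   d(x, Y) < 2 eps d(x, y), so the detour through pi(x) itself costs at most
   4 eps d(x, y) extra. *)

From mathcomp Require Import all_boot all_order all_algebra.
From mathcomp Require Import lra.

Set Implicit Arguments.
Unset Strict Implicit.
Unset Printing Implicit Defensive.
Import Order.TTheory GRing.Theory Num.Theory.
Local Open Scope ring_scope.

Section DetourBounds.

Variables (R : realFieldType) (T : finType) (d : T -> T -> R).
Hypothesis d_metric : is_metric d.

Lemma detour_le (x y u : T) : d x u + d u y <= d x y + 2 * d u y.
Proof.
have [_ _ d_sym d_tri] := d_metric.
by have := d_tri x y u; rewrite (d_sym u y); lra.
Qed.

Lemma detour_near (eps : R) (x y u : T) :
  0 <= eps -> d u y <= eps * d x y -> d x u + d u y <= (1 + 4 * eps) * d x y.
Proof.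
have [d_ge0 _ _ _] := d_metric.
have := detour_le x y u; have := d_ge0 x y; nra.
Qed.

Lemma detour_far (eps : R) (x y p : T) :
  0 < eps -> eps < 1 / 2 -> d x p < eps * d p y ->
  d x p + d p y <= (1 + 4 * eps) * d x y.
Proof.
have [d_ge0 _ d_sym d_tri] := d_metric.
move=> eps_gt0 eps_lt_half far.
have d_py : d p y <= d x p + d x y by rewrite (d_sym x p) d_tri.
have := ler_wpM2l (ltW eps_gt0) d_py.
have := d_ge0 x y; have := d_ge0 x p; have := detour_le x y p; nra.
Qed.

End DetourBounds.

Lemma dhat_le_detour (R : realFieldType) (T : finType) (d : T -> T -> R)
    (N : T -> {set T}) (pi : T -> T) (x y u : T) :
  u \in N x -> dhat d N pi x y <= d x u + d u y.
Proof. exact: bigmin_le_cond. Qed.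

Lemma dhat_ge (R : realFieldType) (T : finType) (d : T -> T -> R)
    (N : T -> {set T}) (pi : T -> T) (x y : T) :
  is_metric d -> d x y <= dhat d N pi x y.
Proof. by case=> _ _ _ d_tri; apply: le_bigmin => [|u _]; apply: d_tri. Qed.

Theorem lemma1p6 (R : realFieldType) (T : finType) (d : T -> T -> R)
  (X Y : {set T}) (eps : R) (pi : T -> T) (N : T -> {set T}) :
  is_metric d ->
  0 < eps -> eps < 1 / 2 ->
  is_proj d Y X pi ->
  (forall x, x \in X ->
     is_net d (eps * d x (pi x)) (N x) (ballS d Y (pi x) (d x (pi x) / eps))
     /\ pi x \in N x) ->
  forall x y, x \in X -> y \in Y ->
    d x y <= dhat d N pi x y /\ dhat d N pi x y <= (1 + 4 * eps) * d x y.
Proof.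
move=> d_metric eps_gt0 eps_lt_half pi_proj N_net x y xX yY.
split; first exact: dhat_ge.
have [_ pi_min] := pi_proj x xX.
have [[_ _ N_covers] pi_in_N] := N_net x xX.
have [y_near | y_far] := leP (d (pi x) y) (d x (pi x) / eps).
  have [|u uN d_yu] := N_covers y; first by rewrite inE yY y_near.
  apply: le_trans (dhat_le_detour d pi y uN) _; apply: detour_near (ltW _) _ => //.
  have [_ _ d_sym _] := d_metric; rewrite d_sym.
  by apply: le_trans d_yu (ler_wpM2l (ltW eps_gt0) (pi_min y yY)).
apply: le_trans (dhat_le_detour d pi y pi_in_N) _; apply: detour_far => //.
by rewrite mulrC -ltr_pdivrMr.
Qed.
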